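(* Let $G=(\mathcal V,\mathcal E)$ with $|\mathcal V|=n$, $\chi=\{0,\dots,d-1\}$, $C$, $2\le m\le n$ and $\mathbb L_m$ be as in the context, let $\mathcal V_m$ be the set of vertices of $\mathbb L_m$, $\mathcal V_m^*$ the set of vertices minimizing $\langle C,\cdot\rangle$ over $\mathbb L_m$, and $\Delta=\min_{V_1\in\mathcal V_m\setminus\mathcal V_m^*,\,V_2\in\mathcal V_m^*}(\langle C,V_1\rangle-\langle C,V_2\rangle)$. If $\mathbb L_m$ is tight, $|\mathcal V_m^*|=1$, and $\eta\ge\frac{\log(8mn^md^m)+2mn^md^m}{\Delta}$, then the assignment $x_i=\arg\max_{x'\in\chi}(\Gamma^*_\eta)_i(x')$, $i\in\mathcal V$, is a MAP assignment, i.e. it maximizes $\sum_{i}\theta_i(x_i)+\sum_{ij\in\mathcal E}\theta_{ij}(x_i,x_j)$ over $\chi^n$.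
   Context: A pairwise graphical model has vertex set $\mathcal V=\{1,\dots,n\}$, edge set $\mathcal E$ (each vertex lies on at least one edge), state set $\chi=\{0,\dots,d-1\}$, potentials $\theta_i:\chi\to\mathbb R$, $\theta_{ij}:\chi^2\to\mathbb R$, and cost $C=-\theta$. For $2\le m\le n$, the Sherali–Adams polytope $\mathbb L_m$ is the set of collections $\Gamma=(\Gamma_S)_{S\subseteq\mathcal V,1\le|S|\le m}$ of nonnegative functions $\Gamma_S:\chi^S\to[0,\infty)$ each summing to $1$, such that for $S\subset T$ the marginal of $\Gamma_T$ on $S$ is $\Gamma_S$; $\Gamma_i=\Gamma_{\{i\}}$, $\Gamma_{ij}=\Gamma_{\{i,j\}}$. $C$ is extended by $0$ on subsets that are neither singletons nor edges and $\langle C,\Gamma\rangle=\sum_i\sum_xC_i(x)\Gamma_i(x)+\sum_{ij\in\mathcal E}\sum_{x_i,x_j}C_{ij}(x_i,x_j)\Gamma_{ij}(x_i,x_j)$. $H(\Gamma)=\sum\Gamma(-\log\Gamma+1)$ summed over all entries, and $\Gamma^*_\eta=\arg\min_{\Gamma\in\mathbb L_m}\langle C,\Gamma\rangle-\frac1\eta H(\Gamma)$. $\mathbb L_m$ is tight if $\max_{\Gamma\in\mathbb L_m}\langle\theta,\Gamma\rangle$ has an integral optimal solution. *)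

From HB Require Import structures.
From mathcomp Require Import all_boot all_order all_algebra.
From mathcomp Require Import reals exp.
Set Implicit Arguments. Unset Strict Implicit. Unset Printing Implicit Defensive.
Import Order.TTheory GRing.Theory Num.Theory.
Local Open Scope ring_scope.

Section SheraliAdams.
Variables (R : realType) (n d : nat).

(* An entry Gamma_S(x_S) of the
   collection (Gamma_S)_S is encoded as the value of Gamma at the partial
   assignment with domain S that coincides with x_S on S. *)
Definition pa := {ffun 'I_n -> option 'I_d}.
Definition dom (y : pa) : {set 'I_n} := [set i | y i != None].
Definition pa1 (i : 'I_n) (x : 'I_d) : pa :=
  [ffun k => if k == i then Some x else None].
Definition pa2 (i j : 'I_n) (xi xj : 'I_d) : pa :=
  [ffun k => if k == i then Some xi else if k == j then Some xj else None].
Definition in_range (m : nat) (y : pa) : bool :=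
  (0 < #|dom y|)%N && (#|dom y| <= m)%N.
Definition agrees_on (S : {set 'I_n}) (z y : pa) : bool :=
  [forall i in S, z i == y i].

Definition SA_polytope (m : nat) (G : {ffun pa -> R}) : Prop :=
  [/\ (forall y, ~~ in_range m y -> G y = 0),
      (forall y, in_range m y -> 0 <= G y),
      (forall S : {set 'I_n}, (0 < #|S|)%N -> (#|S| <= m)%N ->
          \sum_(y | dom y == S) G y = 1) &
      (forall (S T : {set 'I_n}) (y : pa),
          (0 < #|S|)%N -> S \subset T -> (#|T| <= m)%N -> dom y = S ->
          G y = \sum_(z | (dom z == T) && agrees_on S z y) G z)].

(* Pairwise model: edges are ordered pairs (i,j) with i < j, potentials
   th1 (theta_i) and th2 (theta_ij); the cost is C = - theta. *)
Variables (E : {set 'I_n * 'I_n}) (th1 : 'I_n -> 'I_d -> R)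
  (th2 : 'I_n -> 'I_n -> 'I_d -> 'I_d -> R).

Definition pot_dot (t1 : 'I_n -> 'I_d -> R) (t2 : 'I_n -> 'I_n -> 'I_d -> 'I_d -> R)
  (G : {ffun pa -> R}) : R :=
  \sum_(i : 'I_n) \sum_(x : 'I_d) t1 i x * G (pa1 i x) +
  \sum_(e in E) \sum_(xi : 'I_d) \sum_(xj : 'I_d)
      t2 e.1 e.2 xi xj * G (pa2 e.1 e.2 xi xj).

Definition theta_dot (G : {ffun pa -> R}) : R := pot_dot th1 th2 G.
Definition cost_dot (G : {ffun pa -> R}) : R :=
  pot_dot (fun i x => - th1 i x) (fun i j a b => - th2 i j a b) G.

Definition entropy (m : nat) (G : {ffun pa -> R}) : R :=
  \sum_(y | in_range m y) G y * (- ln (G y) + 1).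

Definition is_reg_opt (m : nat) (eta : R) (G : {ffun pa -> R}) : Prop :=
  SA_polytope m G /\
  forall G', SA_polytope m G' ->
    cost_dot G - eta^-1 * entropy m G <= cost_dot G' - eta^-1 * entropy m G'.

Definition is_vertex (m : nat) (G : {ffun pa -> R}) : Prop :=
  SA_polytope m G /\
  forall (A B : {ffun pa -> R}) (t : R), SA_polytope m A -> SA_polytope m B ->
    0 < t < 1 -> (forall y, G y = t * A y + (1 - t) * B y) -> A = B.

Definition is_opt_vertex (m : nat) (G : {ffun pa -> R}) : Prop :=
  is_vertex m G /\ forall G', SA_polytope m G' -> cost_dot G <= cost_dot G'.

Definition is_min_gap (m : nat) (Delta : R) : Prop :=
  (exists V1 V2, [/\ is_vertex m V1, ~ is_opt_vertex m V1, is_opt_vertex m V2 &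
                   Delta = cost_dot V1 - cost_dot V2]) /\
  (forall V1 V2, is_vertex m V1 -> ~ is_opt_vertex m V1 -> is_opt_vertex m V2 ->
                 Delta <= cost_dot V1 - cost_dot V2).

Definition integral (m : nat) (G : {ffun pa -> R}) : Prop :=
  forall y, in_range m y -> G y = 0 \/ G y = 1.
Definition SA_tight (m : nat) : Prop :=
  exists G, [/\ SA_polytope m G, integral m G &
                forall G', SA_polytope m G' -> theta_dot G' <= theta_dot G].

Definition score (x : {ffun 'I_n -> 'I_d}) : R :=
  \sum_(i : 'I_n) th1 i (x i) + \sum_(e in E) th2 e.1 e.2 (x e.1) (x e.2).
Definition is_MAP (x : {ffun 'I_n -> 'I_d}) : Prop :=
  forall x' : {ffun 'I_n -> 'I_d}, score x' <= score x.
End SheraliAdams.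

From HB Require Import structures.
From mathcomp Require Import all_boot all_order all_algebra.
From mathcomp Require Import reals exp.
From mathcomp Require Import ring lra.
From Stdlib Require Import Classical.
Set Implicit Arguments. Unset Strict Implicit. Unset Printing Implicit Defensive.
Import Order.TTheory GRing.Theory Num.Theory.
Local Open Scope ring_scope.

(* Tightness makes the unique C-optimal vertex V of L_m integral, so V is the
   indicator point of an assignment.  L_m is a bounded polytope in standard form,
   so a non-extreme point of L_m lies strictly between two points of L_m of smaller
   support; induction on the support gives
     Delta * (1 - Gamma p) <= <C, Gamma> - <C, V>
   for every Gamma in L_m and every entry p with V p = 1.  The entropy of a point
   of L_m lies between 0 and the number N <= m n^m d^m of entries, hence
   <C, Gamma*> - <C, V> <= N / eta < Delta / 2.  So Gamma* gives mass above 1/2 to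
   the label chosen by V at each vertex, the argmax assignment is the assignment
   of V, and it is MAP because V maximizes <theta, .> over L_m. *)

Lemma convex_comb_eq0 (R : realFieldType) (t a b : R) : 0 < t < 1 -> 0 <= a -> 0 <= b ->
  t * a + (1 - t) * b = 0 -> a = 0 /\ b = 0.
Proof. move=> /andP[t0 t1] a0 b0 h; split; nra. Qed.

Section StandardFormPolytope.
Variables (R : realFieldType) (T : finType) (P : {ffun T -> R} -> Prop).

Definition shift (x : {ffun T -> R}) (s : R) (A B : {ffun T -> R}) : {ffun T -> R} :=
  [ffun y => x y + s * (A y - B y)].

Hypothesis P_ge0 : forall x y, P x -> 0 <= x y.
Hypothesis P_shift : forall x A B s, P x -> P A -> P B ->
  (forall y, 0 <= x y + s * (A y - B y)) -> P (shift x s A B).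
(* Stands in for boundedness: every nonzero direction A - B of P has a negative
   coordinate. *)
Hypothesis P_antichain : forall A B, P A -> P B -> (forall y, A y <= B y) -> A = B.

Definition extreme (G : {ffun T -> R}) : Prop :=
  P G /\
  forall (A B : {ffun T -> R}) (t : R), P A -> P B ->
    0 < t < 1 -> (forall y, G y = t * A y + (1 - t) * B y) -> A = B.

Definition supp (x : {ffun T -> R}) : {set T} := [set y | x y != 0].

Lemma extreme_or_split x : P x -> extreme x \/
  exists A B t, [/\ P A, P B, 0 < t < 1,
                   forall y, x y = t * A y + (1 - t) * B y & A != B].
Proof.
move=> Px; case: (classic (exists A B t, [/\ P A, P B, 0 < t < 1,
                   forall y, x y = t * A y + (1 - t) * B y & A != B])); first by right.
move=> no_split; left; split=> // A B t PA PB t01 xE; apply: NNPP => /eqP AB.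
by apply: no_split; exists A, B, t.
Qed.

Lemma exists_lt_of_neq A B : P A -> P B -> A != B -> exists y, A y < B y.
Proof.
move=> PA PB /eqP AB; apply: NNPP => no_lt; apply: AB.
apply/esym/P_antichain => // y; rewrite leNgt; apply/negP => lt.
by apply: no_lt; exists y.
Qed.

Lemma shrink_support x A B : P x -> P A -> P B ->
    (forall y, x y = 0 -> A y = B y) -> (exists y, A y < B y) ->
  exists2 s, 0 < s & P (shift x s A B) /\
                     (#|supp (shift x s A B)| < #|supp x|)%N.
Proof.
move=> Px PA PB same0 [y0 lt0].
have [z /= ltz zmin] := @arg_minP _ R T y0 [pred y | A y < B y]
  (fun y => x y / (B y - A y)) lt0.
have xz_neq0 : x z != 0 by apply: contraTneq ltz => /same0 ->; rewrite ltxx.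
have xz_gt0 : 0 < x z by rewrite lt_def xz_neq0 P_ge0.
have Bz_gt0 : 0 < B z - A z by rewrite subr_gt0.
set s := x z / (B z - A z).
have s_gt0 : 0 < s by rewrite divr_gt0.
exists s => //; split.
  apply: P_shift => // y; case: (ltP (A y) (B y)) => [lty|BA].
    have := zmin y lty; rewrite ler_pdivlMr ?subr_gt0 // => h.
    rewrite /s; nra.
  by have := P_ge0 y Px; nra.
apply/proper_card/properP; split.
  apply/subsetP => y; rewrite !inE ffunE; apply: contraNN => /eqP xy0.
  by rewrite xy0 (same0 _ xy0) subrr mulr0 addr0.
exists z; rewrite !inE ?xz_neq0 // ffunE negbK /s.
by apply/eqP; field; rewrite gt_eqF.
Qed.

Variables (C : {ffun T -> R} -> R) (V : {ffun T -> R}) (p : T) (Delta : R).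
Hypothesis C_shift : forall x s A B, C (shift x s A B) = C x + s * (C A - C B).
Hypothesis Delta_ge0 : 0 <= Delta.
Hypothesis Vp : V p = 1.
Hypothesis V_unique : forall W, extreme W -> (forall G, P G -> C W <= C G) -> W = V.
Hypothesis V_gap : forall W, extreme W -> ~ (forall G, P G -> C W <= C G) ->
  Delta <= C W - C V.

Lemma unique_extreme_gap_bound x : P x -> Delta * (1 - x p) <= C x - C V.
Proof.
have [k] := ubnP #|supp x|; elim: k x => // k IH x supp_lt Px.
have [ext | [A [B [t [PA PB t01 xE AB]]]]] := extreme_or_split Px.
  have [opt | nopt] := classic (forall G, P G -> C x <= C G).
    by rewrite (V_unique ext opt) Vp subrr mulr0 subrr.
  by have := V_gap ext nopt; have := mulr_ge0 Delta_ge0 (P_ge0 p Px); lra.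
have sameAB y : x y = 0 -> A y = B y.
  move=> xy0; rewrite xE in xy0.
  by have [-> ->] := convex_comb_eq0 t01 (P_ge0 y PA) (P_ge0 y PB) xy0.
have sameBA y : x y = 0 -> B y = A y by move/sameAB.
have [s1 s1_gt0 [P1 lt1]] := shrink_support Px PA PB sameAB (exists_lt_of_neq PA PB AB).
have BA : B != A by rewrite eq_sym.
have [s2 s2_gt0 [P2 lt2]] := shrink_support Px PB PA sameBA (exists_lt_of_neq PB PA BA).
have := IH _ (leq_trans lt1 (ltnSE supp_lt)) P1.
have := IH _ (leq_trans lt2 (ltnSE supp_lt)) P2.
(* x is the convex combination of the two shifted points with weights
   s2 / (s1 + s2) and s1 / (s1 + s2), and both sides of the bound are affine. *)
rewrite !C_shift !ffunE; nra.
Qed.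

End StandardFormPolytope.


Lemma sum_indicator (R : numDomainType) (I : finType) (Q : pred I) (r : I) :
  \sum_(y | Q y) ((y == r)%:R : R) = (Q r)%:R.
Proof.
case Qr: (Q r).
  by rewrite (bigD1 r) //= eqxx big1 ?addr0 // => y /andP[_ /negbTE ->].
by apply: big1 => y Qy; case: eqP Qy => // ->; rewrite Qr.
Qed.

Section SheraliAdamsPolytope.
Variables (R : realType) (n d m : nat).
Local Notation pa := (pa n d).
Local Notation F := {ffun pa -> R}.
Local Notation SA := (@SA_polytope R n d m).
Implicit Types (G A B x : F) (y z : pa) (i j : 'I_n) (a b : 'I_d) (S T : {set 'I_n}).

Lemma SA_ge0 G y : SA G -> 0 <= G y.
Proof.
case=> out_of_range ge0 _ _; case ry: (in_range m y); first exact: ge0.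
by rewrite out_of_range ?ry.
Qed.

Lemma SA_block_sum G y : SA G -> in_range m y ->
  \sum_(z | dom z == dom y) G z = 1.
Proof. by case=> _ _ block _ /andP[]; apply: block. Qed.

Lemma SA_block_pair_le1 G y z : SA G -> in_range m y -> y != z ->
  dom y = dom z -> G y + G z <= 1.
Proof.
move=> SAG ry yz dyz; rewrite -(SA_block_sum SAG ry).
rewrite (bigD1 y) //= (bigD1 z) /=; last by rewrite dyz eqxx eq_sym yz.
by rewrite addrA lerDl sumr_ge0 // => w _; apply: SA_ge0.
Qed.

Lemma SA_marginal_le G S T y z : SA G -> (0 < #|S|)%N ->
  S \subset T -> (#|T| <= m)%N -> dom y = S -> dom z = T -> agrees_on S z y ->
  G z <= G y.
Proof.
move=> SAG S_gt0 ST Tm dy dz zy; case: (SAG) => _ _ _ marginal.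
rewrite (marginal S T y) // (bigD1 z) /=; last by rewrite dz eqxx zy.
by rewrite lerDl sumr_ge0 // => w _; apply: SA_ge0.
Qed.

Lemma SA_shift x A B s : SA x -> SA A -> SA B ->
  (forall y, 0 <= x y + s * (A y - B y)) -> SA (shift x s A B).
Proof.
case=> x_out _ x_block x_marg [A_out _ A_block A_marg] [B_out _ B_block B_marg] ge0.
have sum_shift (Q : pred pa) : \sum_(z | Q z) shift x s A B z =
    \sum_(z | Q z) x z + s * (\sum_(z | Q z) A z - \sum_(z | Q z) B z).
  by rewrite -sumrB mulr_sumr -big_split; apply: eq_bigr => z _; rewrite ffunE.
split.
- by move=> y ry; rewrite ffunE x_out ?A_out ?B_out // subrr mulr0 addr0.
- by move=> y _; rewrite ffunE.
- by move=> S S_gt0 Sm; rewrite sum_shift x_block ?A_block ?B_block // subrr mulr0 addr0.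
- move=> S T y S_gt0 ST Tm dy.
  by rewrite sum_shift ffunE -x_marg -?A_marg -?B_marg.
Qed.

Lemma SA_antichain A B : SA A -> SA B -> (forall y, A y <= B y) -> A = B.
Proof.
move=> SAA SAB AB; apply/ffunP => y; case ry: (in_range m y); last first.
  by case: SAA => A_out _ _ _; case: SAB => B_out _ _ _; rewrite A_out ?B_out ?ry.
have : \sum_(z | dom z == dom y) (B z - A z) = 0.
  by rewrite sumrB !SA_block_sum // subrr.
move/psumr_eq0P => BA0; apply/eqP; rewrite eq_sym -subr_eq0 BA0 //.
by move=> z _; rewrite subr_ge0.
Qed.

Lemma SA_le1 G y : SA G -> G y <= 1.
Proof.
move=> SAG; case ry: (in_range m y); last by case: SAG => out _ _ _; rewrite out ?ry.
rewrite -(SA_block_sum SAG ry) (bigD1 y) //= lerDl.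
by rewrite sumr_ge0 // => z _; apply: SA_ge0.
Qed.

Lemma integral_is_vertex G : SA G -> integral m G -> is_vertex m G.
Proof.
move=> SAG intG; split=> // A B t SAA SAB t01 GE; apply/ffunP => y.
case ry: (in_range m y); last first.
  by case: SAA => A_out _ _ _; case: SAB => B_out _ _ _; rewrite A_out ?B_out ?ry.
have := SA_ge0 y SAA; have := SA_ge0 y SAB.
have := SA_le1 y SAA; have := SA_le1 y SAB.
by case/andP: t01; case: (intG y ry); rewrite GE => Gy; nra.
Qed.

Section LinearObjective.
Variables (E : {set 'I_n * 'I_n}) (t1 : 'I_n -> 'I_d -> R)
  (t2 : 'I_n -> 'I_n -> 'I_d -> 'I_d -> R).

Lemma pot_dot_shift x s A B : pot_dot E t1 t2 (shift x s A B) =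
  pot_dot E t1 t2 x + s * (pot_dot E t1 t2 A - pot_dot E t1 t2 B).
Proof.
have big_shift (I : finType) (P : pred I) (a b c : I -> R) :
    \sum_(i | P i) (a i + s * (b i - c i)) =
    \sum_(i | P i) a i + s * (\sum_(i | P i) b i - \sum_(i | P i) c i).
  by rewrite -sumrB mulr_sumr -big_split.
have term (c : R) y : c * shift x s A B y = c * x y + s * (c * A y - c * B y).
  by rewrite ffunE; ring.
rewrite /pot_dot.
under eq_bigr do under eq_bigr do rewrite term.
under [X in _ + X]eq_bigr do under eq_bigr do under eq_bigr do rewrite term.
under [X in _ + X]eq_bigr do under eq_bigr do rewrite big_shift.
under eq_bigr do rewrite big_shift.
under [X in _ + X]eq_bigr do rewrite big_shift.
rewrite !big_shift; ring.
Qed.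

Lemma cost_dotE G : cost_dot E t1 t2 G = - theta_dot E t1 t2 G.
Proof.
rewrite /cost_dot /theta_dot /pot_dot opprD -!sumrN; congr (_ + _).
  by apply: eq_bigr => i _; rewrite -sumrN; apply: eq_bigr => a _; rewrite mulNr.
apply: eq_bigr => e _; rewrite -sumrN; apply: eq_bigr => a _.
by rewrite -sumrN; apply: eq_bigr => b _; rewrite mulNr.
Qed.

End LinearObjective.

Lemma dom_pa1 i a : dom (pa1 i a) = [set i].
Proof. by apply/setP => k; rewrite !inE ffunE; case: (k == i). Qed.

Lemma dom_pa2 i j a b : dom (pa2 i j a b) = [set i; j].
Proof. by apply/setP => k; rewrite !inE ffunE; case: (k == i); case: (k == j). Qed.

Lemma in_range_pa1 i a : (0 < m)%N -> in_range m (pa1 i a).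
Proof. by move=> m_gt0; rewrite /in_range dom_pa1 cards1. Qed.

Section AssignmentPoint.
Variable x : {ffun 'I_n -> 'I_d}.

Definition restr (S : {set 'I_n}) : pa :=
  [ffun k => if k \in S then Some (x k) else None].

Definition assignment_point : F :=
  [ffun y => (in_range m y && (y == restr (dom y)))%:R].

Lemma dom_restr S : dom (restr S) = S.
Proof. by apply/setP => k; rewrite !inE ffunE; case: (k \in S). Qed.

Lemma eq_restr S y : dom y = S ->
  (y == restr S) = [forall k in S, y k == Some (x k)].
Proof.
move=> dy; apply/eqP/forall_inP => [-> k kS | yx]; first by rewrite ffunE kS.
apply/ffunP => k; rewrite ffunE; case: ifP => [/yx/eqP // | kS].
by apply/eqP; move: kS; rewrite -dy inE => /negbFE.
Qed.

Lemma agrees_on_restr S T y : S \subset T -> dom y = S ->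
  agrees_on S (restr T) y = (y == restr S).
Proof.
move=> ST dy; rewrite eq_restr //.
by apply/forall_inP/forall_inP => agree k kS; move: (agree k kS);
  rewrite ffunE (subsetP ST k kS) eq_sym.
Qed.

Lemma assignment_point_dom S y : (0 < #|S|)%N -> (#|S| <= m)%N -> dom y = S ->
  assignment_point y = (y == restr S)%:R.
Proof. by move=> S_gt0 Sm dy; rewrite ffunE /in_range dy S_gt0 Sm. Qed.

Lemma assignment_point_SA : SA assignment_point.
Proof.
split.
- by move=> y ry; rewrite ffunE (negbTE ry).
- by move=> y _; rewrite ffunE.
- move=> S S_gt0 Sm; rewrite (eq_bigr (fun y => (y == restr S)%:R)).
    by rewrite sum_indicator dom_restr eqxx.
  by move=> y /eqP; apply: assignment_point_dom.
- move=> S T y S_gt0 ST Tm dy.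
  have T_gt0 : (0 < #|T|)%N := leq_trans S_gt0 (subset_leq_card ST).
  rewrite (eq_bigr (fun z => (z == restr T)%:R)); last first.
    by move=> z /andP[/eqP dz _]; apply: assignment_point_dom.
  rewrite sum_indicator dom_restr eqxx (assignment_point_dom _ _ dy) //; last first.
    exact: leq_trans (subset_leq_card ST) Tm.
  by rewrite agrees_on_restr.
Qed.

Lemma assignment_point_pa1 i a : (0 < m)%N ->
  assignment_point (pa1 i a) = (a == x i)%:R.
Proof.
move=> m_gt0; rewrite (assignment_point_dom (S := [set i])) ?cards1 ?dom_pa1 //.
rewrite eq_restr ?dom_pa1 //; congr ((nat_of_bool _)%:R).
apply/forall_inP/eqP => [/(_ i (set11 i)) | -> k /set1P ->].
  by rewrite ffunE eqxx => /eqP [].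
by rewrite ffunE eqxx.
Qed.

Lemma assignment_point_pa2 i j a b : (2 <= m)%N -> i != j ->
  assignment_point (pa2 i j a b) = ((a == x i) && (b == x j))%:R.
Proof.
move=> m_ge2 ij.
rewrite (assignment_point_dom (S := [set i; j])) ?cards2 ?ij ?dom_pa2 //.
have ji : (j == i) = false by rewrite eq_sym (negbTE ij).
rewrite eq_restr ?dom_pa2 //; congr ((nat_of_bool _)%:R).
apply/forall_inP/andP => [agree | [/eqP -> /eqP ->] k /set2P [] ->].
- move: (agree i (set21 i j)) (agree j (set22 i j)).
  by rewrite !ffunE eqxx ji eqxx => /eqP [->] /eqP [->].
- by rewrite ffunE eqxx.
- by rewrite ffunE ji eqxx.
Qed.

Lemma theta_assignment_point (E : {set 'I_n * 'I_n}) th1 th2 :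
  (forall e, e \in E -> (e.1 < e.2)%N) -> (2 <= m)%N ->
  theta_dot E th1 th2 assignment_point = score E th1 th2 x.
Proof.
move=> hE m_ge2; have m_gt0 : (0 < m)%N by apply: ltnW.
rewrite /theta_dot /pot_dot /score; congr (_ + _).
  apply: eq_bigr => i _; rewrite (bigD1 (x i)) //= assignment_point_pa1 // eqxx mulr1.
  by rewrite big1 ?addr0 // => a /negbTE ax; rewrite assignment_point_pa1 // ax mulr0.
apply: eq_bigr => e /hE e12; have ij : e.1 != e.2 by rewrite neq_ltn e12.
rewrite (bigD1 (x e.1)) //= (bigD1 (x e.2)) //= assignment_point_pa2 // !eqxx mulr1.
rewrite big1 ?addr0 => [|b /negbTE bx]; last first.
  by rewrite assignment_point_pa2 // bx andbF mulr0.
rewrite big1 ?addr0 // => a /negbTE ax; apply: big1 => b _.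
by rewrite assignment_point_pa2 // ax mulr0.
Qed.

Lemma SA_eq_assignment_point V : (0 < m)%N -> SA V ->
  (forall i, V (pa1 i (x i)) = 1) -> V = assignment_point.
Proof.
move=> m_gt0 SAV Vx.
have V0 y : in_range m y -> y != restr (dom y) -> V y = 0.
  move=> ry; rewrite eq_restr // => /forall_inPn [k k_dom ykx].
  have [c yk] : exists c, y k = Some c.
    by move: k_dom; rewrite inE; case: (y k) => [c|] // _; exists c.
  have cx : pa1 k c != pa1 k (x k).
    apply: contraNneq ykx => /(congr1 (fun z : pa => z k)).
    by rewrite !ffunE eqxx yk => ->.
  have Vy_le : V y <= V (pa1 k c).
    case/andP: ry => _ dym.
    apply: (SA_marginal_le (S := [set k]) (T := dom y) SAV) => //.
    - by rewrite cards1.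
    - by rewrite sub1set.
    - exact: dom_pa1.
    - by apply/forall_inP => i /set1P ->; rewrite ffunE eqxx yk.
  have := SA_block_pair_le1 SAV (in_range_pa1 k c m_gt0) cx.
  by rewrite !dom_pa1 Vx => /(_ erefl); have := SA_ge0 y SAV; lra.
apply/ffunP => y; rewrite ffunE; case ry: (in_range m y) => /=; last first.
  by case: SAV => out _ _ _; rewrite out ?ry.
case: eqP => [yE | /eqP ne] /=; last by rewrite V0.
have := SA_block_sum SAV ry; rewrite (bigD1 y) //= big1 ?addr0 // => z /andP[/eqP dz zy].
apply: V0; first by rewrite /in_range dz.
by apply: contra_neq zy => zE; rewrite zE yE dz.
Qed.

End AssignmentPoint.

Section Counting.
Variables (i0 : 'I_n) (a0 : 'I_d).

(* A partial assignment with at most m assigned vertices is determined by the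
   list of its assigned vertices, padded to length m, and their values. *)
Definition enc_dom y : {ffun 'I_m -> 'I_n} :=
  [ffun j : 'I_m => nth (head i0 (enum (dom y))) (enum (dom y)) j].
Definition enc_val y : {ffun 'I_m -> 'I_d} :=
  [ffun j : 'I_m => odflt a0 (y (enc_dom y j))].

Lemma mem_dom_enc y k : in_range m y ->
  (k \in dom y) <-> exists j : 'I_m, enc_dom y j = k.
Proof.
case/andP=> y_gt0 ym; rewrite cardE in y_gt0 ym; split.
  move=> ky; have kdom : k \in enum (dom y) by rewrite mem_enum.
  have km : (index k (enum (dom y)) < m)%N by apply: leq_trans ym; rewrite index_mem.
  by exists (Ordinal km); rewrite ffunE /= nth_index.
case=> j <-; rewrite ffunE -mem_enum.
case: (ltnP j (size (enum (dom y)))) => jy; first exact: mem_nth.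
rewrite nth_default //; move: y_gt0.
by case: (enum (dom y)) => //= a s _; apply: mem_head.
Qed.

Lemma enc_inj :
  {in [set y : pa | in_range m y] &, injective (fun y => (enc_dom y, enc_val y))}.
Proof.
move=> y1 y2; rewrite !inE => r1 r2 [dom12 val12]; apply/ffunP => k.
have encE y (j : 'I_m) : in_range m y -> y (enc_dom y j) = Some (enc_val y j).
  move=> ry; have : enc_dom y j \in dom y by apply/(mem_dom_enc _ ry); exists j.
  by rewrite inE [enc_val y j]ffunE; case: (y (enc_dom y j)).
case: (boolP (k \in dom y1)) => k1.
  have [j <-] := (mem_dom_enc _ r1).1 k1.
  by rewrite (encE _ _ r1) dom12 (encE _ _ r2) val12.
have k2 : k \notin dom y2.
  apply: contra k1 => /(mem_dom_enc _ r2) [j jk].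
  by apply/(mem_dom_enc _ r1); exists j; rewrite dom12.
by move: k1 k2; rewrite !inE !negbK => /eqP -> /eqP ->.
Qed.

Lemma card_in_range : (#|[set y : pa | in_range m y]| <= n ^ m * d ^ m)%N.
Proof.
rewrite -(card_in_imset enc_inj); apply: leq_trans (max_card _) _.
by rewrite card_prod !card_ffun !card_ord.
Qed.

End Counting.

Lemma entropy_term_le1 (t : R) : 0 <= t -> t * (- ln t + 1) <= 1.
Proof.
rewrite le_eqVlt => /orP[/eqP <- | t_gt0]; first by rewrite mul0r ler01.
have tV_gt0 : 0 < t^-1 by rewrite invr_gt0.
have : ln (1 + (t^-1 - 1)) <= t^-1 - 1 by apply: le_ln1Dx; lra.
rewrite addrC subrK lnV ?posrE // => lnt.
have : t * (- ln t + 1) <= t * t^-1 by apply: ler_wpM2l; [apply: ltW | lra].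
by rewrite mulfV ?gt_eqF.
Qed.

Lemma entropy_ge0 G : SA G -> 0 <= entropy m G.
Proof.
move=> SAG; apply: sumr_ge0 => y _; apply: mulr_ge0; first exact: SA_ge0.
by have := ln_le0 (SA_le1 y SAG); lra.
Qed.

Lemma entropy_le_card G : SA G -> entropy m G <= #|[set y : pa | in_range m y]|%:R.
Proof.
move=> SAG; rewrite -sum1_card natr_sum.
rewrite (eq_bigl (fun y => in_range m y)) => [|y]; last by rewrite inE.
by apply: ler_sum => y _; apply/entropy_term_le1/SA_ge0.
Qed.

Lemma reg_opt_cost_le (E : {set 'I_n * 'I_n}) th1 th2 eta G W :
  is_reg_opt E th1 th2 m eta G -> 0 < eta -> SA W ->
  cost_dot E th1 th2 G - cost_dot E th1 th2 W <=
    eta^-1 * #|[set y : pa | in_range m y]|%:R.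
Proof.
move=> [SAG Gopt] eta_gt0 SAW; have := Gopt W SAW.
have etaV_gt0 : 0 < eta^-1 by rewrite invr_gt0.
have := ler_wpM2l (ltW etaV_gt0) (entropy_le_card SAG).
have := mulr_ge0 (ltW etaV_gt0) (entropy_ge0 SAW).
lra.
Qed.

End SheraliAdamsPolytope.

Lemma eta_Delta_gt (R : realType) (K N : nat) (eta Delta : R) :
  0 < Delta -> (K <= N)%N -> (0 < N)%N ->
  (ln (8 * N)%:R + (2 * N)%:R) / Delta <= eta -> 2 * K%:R < eta * Delta.
Proof.
move=> Delta_gt0 KN N_gt0; rewrite ler_pdivrMr // (natrM _ 2 N) => eta_ge.
have ln_gt0 : 0 < ln (8 * N)%:R :> R.
  by apply: ln_gt0; rewrite ltr1n (leq_trans _ (leq_pmulr 8 N_gt0)).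
have : K%:R <= N%:R :> R by rewrite ler_nat.
lra.
Qed.

Section MAPRecovery.
Variables (R : realType) (n d m : nat) (E : {set 'I_n * 'I_n})
  (th1 : 'I_n -> 'I_d -> R) (th2 : 'I_n -> 'I_n -> 'I_d -> 'I_d -> R).
Local Notation pa := (pa n d).
Local Notation F := {ffun pa -> R}.
Local Notation SA := (@SA_polytope R n d m).
Local Notation cost := (cost_dot E th1 th2).
Local Notation opt_vertex := (is_opt_vertex E th1 th2 m).
Implicit Types (G V W : F) (i : 'I_n) (a b : 'I_d).

Lemma opt_vertex_gap_bound V Delta p G : opt_vertex V ->
  (forall W, opt_vertex W -> W = V) -> is_min_gap E th1 th2 m Delta ->
  0 <= Delta -> V p = 1 -> SA G -> Delta * (1 - G p) <= cost G - cost V.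
Proof.
move=> V_opt V_unique [_ V_gap] Delta_ge0 Vp.
apply: (unique_extreme_gap_bound (@SA_ge0 R n d m) (@SA_shift R n d m)
  (@SA_antichain R n d m) (@pot_dot_shift R n d E _ _)) => //.
- by move=> W W_vertex W_opt; apply: V_unique.
- move=> W W_vertex W_nopt; apply: V_gap => // [[_]]; exact: W_nopt.
Qed.

Lemma min_gap_gt0 Delta : is_min_gap E th1 th2 m Delta -> 0 < Delta.
Proof.
move=> [[V1 [V2 [V1_vertex V1_nopt V2_opt ->]]] _]; rewrite subr_gt0 ltNge.
apply/negP => le12; apply: V1_nopt; split=> // G SAG.
exact: le_trans le12 (V2_opt.2 G SAG).
Qed.

Lemma tight_opt_vertex_integral V : SA_tight E th1 th2 m -> opt_vertex V ->
  (forall W, opt_vertex W -> W = V) -> integral m V.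
Proof.
move=> [G [SAG intG Gmax]] _ V_unique; suff <- : G = V by [].
apply: V_unique; split; first exact: integral_is_vertex.
by move=> G' SAG'; rewrite !cost_dotE lerN2; apply: Gmax.
Qed.

Lemma dom_eq_set1 (z : pa) i : dom z = [set i] -> exists a, z = pa1 i a.
Proof.
move=> dz; have : i \in dom z by rewrite dz set11.
rewrite inE; case zi: (z i) => [a|] // _; exists a; apply/ffunP => k; rewrite ffunE.
case: eqP => [-> // | /eqP ki]; have : k \notin dom z by rewrite dz inE.
by rewrite inE negbK => /eqP.
Qed.

Lemma integral_label V i : (0 < m)%N -> SA V -> integral m V ->
  exists a, V (pa1 i a) = 1.
Proof.
move=> m_gt0 SAV intV; apply: NNPP => no_label.
case: (SAV) => _ _ block _; have := block [set i]; rewrite cards1 => /(_ erefl m_gt0).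
rewrite big1 => [/eqP|z /eqP dz]; first by rewrite eq_sym oner_eq0.
have [a za] := dom_eq_set1 dz.
have rz : in_range m z by rewrite /in_range dz cards1.
by case: (intV z rz) => // Vz1; case: no_label; exists a; rewrite -za.
Qed.

Lemma argmax_label G i a b : (0 < m)%N -> SA G -> 1 / 2 < G (pa1 i a) ->
  G (pa1 i a) <= G (pa1 i b) -> b = a.
Proof.
move=> m_gt0 SAG half ab; apply/eqP; apply: contraTT half => ba.
have neq : pa1 i b != pa1 i a.
  by apply: contraNneq ba => /(congr1 (fun z : pa => z i)); rewrite !ffunE eqxx => -[->].
have := SA_block_pair_le1 SAG (in_range_pa1 i b m_gt0) neq.
by rewrite !dom_pa1 => /(_ erefl); rewrite -leNgt; lra.
Qed.

Lemma reg_opt_mass_gt_half eta Delta G V p : is_reg_opt E th1 th2 m eta G -> SA V ->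
  0 < Delta -> 2 * #|[set y : pa | in_range m y]|%:R < eta * Delta ->
  Delta * (1 - G p) <= cost G - cost V -> 1 / 2 < G p.
Proof.
move=> Gopt SAV Delta_gt0 eta_big gap.
set K : R := #|[set y : pa | in_range m y]|%:R in eta_big.
have eta_gt0 : 0 < eta.
  by rewrite -(pmulr_lgt0 _ Delta_gt0); apply: le_lt_trans eta_big; rewrite mulr_ge0.
have := reg_opt_cost_le Gopt eta_gt0 SAV; rewrite -/K => cost_le.
have : eta * (Delta * (1 - G p)) <= eta * (eta^-1 * K).
  by apply: ler_wpM2l; [apply: ltW | apply: le_trans cost_le].
rewrite mulVKf ?gt_eqF // mulrA.
have : 0 < eta * Delta by rewrite mulr_gt0.
move: (eta * Delta) eta_big => A; nra.
Qed.

Lemma assignment_point_MAP x : (forall e, e \in E -> (e.1 < e.2)%N) -> (2 <= m)%N ->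
  (forall G, SA G -> cost (assignment_point R m x) <= cost G) -> is_MAP E th1 th2 x.
Proof.
move=> hE m_ge2 x_opt x'; rewrite -!(theta_assignment_point _ _ _ hE m_ge2).
by rewrite -lerN2 -!cost_dotE; apply/x_opt/assignment_point_SA.
Qed.

End MAPRecovery.

Theorem corollary1 (R : realType) (n d m : nat) (E : {set 'I_n * 'I_n})
  (th1 : 'I_n -> 'I_d -> R) (th2 : 'I_n -> 'I_n -> 'I_d -> 'I_d -> R)
  (hE : forall e, e \in E -> (e.1 < e.2)%N)
  (hcov : forall i : 'I_n, exists2 e, e \in E & (e.1 == i) || (e.2 == i))
  (hm : (2 <= m)%N) (hmn : (m <= n)%N)
  (htight : SA_tight E th1 th2 m)
  (huniq : exists V, is_opt_vertex E th1 th2 m V /\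
             forall W, is_opt_vertex E th1 th2 m W -> W = V)
  (Delta : R) (hDelta : is_min_gap E th1 th2 m Delta)
  (eta : R)
  (heta : (ln ((8 * m * n ^ m * d ^ m)%N)%:R + ((2 * m * n ^ m * d ^ m)%N)%:R)
            / Delta <= eta)
  (Gstar : {ffun pa n d -> R}) (hGstar : is_reg_opt E th1 th2 m eta Gstar)
  (x : {ffun 'I_n -> 'I_d})
  (hx : forall (i : 'I_n) (x' : 'I_d), Gstar (pa1 i x') <= Gstar (pa1 i (x i))) :
  is_MAP E th1 th2 x.
Proof.
have m_gt0 : (0 < m)%N := ltnW hm.
have n_gt0 : (0 < n)%N := leq_trans m_gt0 hmn.
have d_gt0 : (0 < d)%N := leq_ltn_trans (leq0n _) (ltn_ord (x (Ordinal n_gt0))).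
have [V [V_opt V_unique]] := huniq.
have SAV : SA_polytope m V by case: V_opt => -[].
have intV := tight_opt_vertex_integral htight V_opt V_unique.
have Delta_gt0 := min_gap_gt0 hDelta.
have eta_big : 2 * #|[set y : pa n d | in_range m y]|%:R < eta * Delta.
  apply: (@eta_Delta_gt _ _ (m * (n ^ m * d ^ m))) => //.
  - apply: leq_trans (leq_pmull _ m_gt0).
    exact: card_in_range m (Ordinal n_gt0) (Ordinal d_gt0).
  - by rewrite !muln_gt0 m_gt0 !expn_gt0 n_gt0 d_gt0.
  - by rewrite !mulnA.
have V_label i : V (pa1 i (x i)) = 1.
  have [a Va] := integral_label i m_gt0 SAV intV.
  have gap := opt_vertex_gap_bound V_opt V_unique hDelta (ltW Delta_gt0) Va hGstar.1.
  have half := reg_opt_mass_gt_half hGstar SAV Delta_gt0 eta_big gap.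
  by rewrite (argmax_label m_gt0 hGstar.1 half (hx i a)).
apply: assignment_point_MAP hE hm _.
by rewrite -(SA_eq_assignment_point m_gt0 SAV V_label); case: V_opt.
Qed.
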